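(* Consider the system of interacting Bernoulli processes $\{(X_{t,h})_{t\geq1}: h\in\mathcal H\}$ defined in the context, with $\mathcal H$ a finite set of $N$ elements, parameters $\theta_h>0$, $c\geq\theta_h$, and interaction matrix $\Gamma=(\gamma_{j,h})_{j,h\in\mathcal H}$ satisfying: (A1) $\Gamma$ is non-negative and $\sum_{j\in\mathcal H}\gamma_{j,h}\le 1$ for each $h$; (A2) $\Gamma$ is irreducible. Let $\mathbf Y_n=(Y_{n,k})_{k\in\mathcal H}$, $n\ge1$, be random vectors such that exactly one component of $\mathbf Y_n$ equals $1$ and the others equal $0$, and assume (A3): $\mathbf Y_n$ is independent of $\mathbf X_n=(X_{n,h})_{h\in\mathcal H}$ and of all the past up to time $n-1$, with $P(Y_{n,k}=1)=\pi_k\in(0,1)$, $\sum_{k\in\mathcal H}\pi_k=1$. Set $S_{t,k,h}=\sum_{n=1}^t X_{n,h}Y_{n,k}$. Denote by $\gamma^*\in(0,1]$ the Perron–Frobenius eigenvalue of $\Gamma$ and let $S_{\infty,h}$ be the almost sure limit of $S_{t,h}/t^{\gamma^*}$ (a finite strictly positive random variable), where $S_{t,h}=\sum_{n=1}^tX_{n,h}$. Then, for each pair $h,k\in\mathcal H$, $$\frac{S_{t,k,h}}{t^{\gamma^*}}\longrightarrow \pi_kS_{\infty,h}\quad\text{almost surely},$$ and hence $S_{t,k,h}/S_{t,j,h}\to\pi_k/\pi_j$ almost surely for all $k,j,h\in\mathcal H$.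
   Context: Model: For $t\geq 0$, given the past up to time $t$, the random variables $X_{t+1,h}\in\{0,1\}$, $h\in\mathcal H$, are conditionally independent with $$P(X_{t+1,h}=1\mid \text{past up to } t)=\frac{\theta_h+\sum_{j\in\mathcal H}\gamma_{j,h}S_{t,j}}{c+t},\qquad S_{t,j}=\sum_{n=1}^t X_{n,j}.$$ Irreducibility of $\Gamma$ means the directed graph with weighted adjacency matrix $\Gamma$ is strongly connected. (In the application, $Y_{n,k}=1$ indicates that item $n$ belongs to category $k$.) *)

From HB Require Import structures.
From mathcomp Require Import all_boot all_order all_algebra.
From mathcomp Require Import all_classical all_reals all_analysis.
Set Implicit Arguments. Unset Strict Implicit. Unset Printing Implicit Defensive.
Import Order.TTheory GRing.Theory Num.Theory.
Local Open Scope classical_set_scope.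
Local Open Scope ring_scope.

Definition Scount {R : realType} {H : finType} (x : nat -> H -> bool) (t : nat) (j : H) : R :=
  \sum_(1 <= n < t.+1) (x n j)%:R.

Definition pmodel {R : realType} {H : finType} (theta : H -> R) (c : R)
  (gamma : H -> H -> R) (x : nat -> H -> bool) (t : nat) (h : H) : R :=
  (theta h + \sum_(j : H) gamma j h * Scount x t j) / (c + t%:R).

Definition past_event {T : Type} {H : finType} (X Y : nat -> H -> T -> bool)
  (t : nat) (xw yw : nat -> H -> bool) : set T :=
  [set w | forall m, (1 <= m <= t)%N ->
     (forall h, X m h w = xw m h) /\ (forall k, Y m k w = yw m k)].

Definition Xvec_event {T : Type} {H : finType} (X : nat -> H -> T -> bool)
  (n : nat) (x : H -> bool) : set T := [set w | forall h, X n h w = x h].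

Definition irreducible {R : realType} {H : finType} (gamma : H -> H -> R) : Prop :=
  forall j h : H, connect (fun a b => 0 < gamma a b) j h.

(* g is the Perron-Frobenius eigenvalue (= spectral radius) of Gamma:
   g >= 0 is a (real) eigenvalue of Gamma, and every complex eigenvalue
   alpha + i beta (with complex eigenvector a + i b, written in real
   coordinates) satisfies |alpha + i beta| <= g. *)
Definition PF_eigenvalue {R : realType} {H : finType} (gamma : H -> H -> R) (g : R) : Prop :=
  0 <= g /\
  (exists v : H -> R, (exists h, v h != 0) /\
     forall j, \sum_(h : H) gamma j h * v h = g * v j) /\
  (forall (alpha beta : R) (a b : H -> R),
     (exists h, (a h != 0) || (b h != 0)) ->
     (forall j, \sum_(h : H) gamma j h * a h = alpha * a j - beta * b j) ->
     (forall j, \sum_(h : H) gamma j h * b h = beta * a j + alpha * b j) ->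
     alpha ^+ 2 + beta ^+ 2 <= g ^+ 2).

From HB Require Import structures.
From mathcomp Require Import all_boot all_order all_algebra.
From mathcomp Require Import all_classical all_reals all_analysis.
From mathcomp Require Import ring lra zify.
Import Order.TTheory GRing.Theory Num.Theory numFieldNormedType.Exports.
Local Open Scope classical_set_scope.
Local Open Scope ring_scope.

(* Write S_{t,k,h} = pi_k S_{t,h} + D_t with D_t = sum_{n <= t} X_{n,h} (Y_{n,k} - pi_k).
   By (A3) the increments of D are centred given the past, so stopping D at the
   m-th success of h gives a martingale V, with N = min(S_{t,h}, m), for which
   V^2 - N and V^4 - 8 N V^2 are supermartingales; hence E[V^4] <= 8 m^2 and,
   by Markov, |D| exceeds m / (j + 1) at the time of the m-th success with
   probability at most 8 (j + 1)^4 / m^2.  This is summable in m, so by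
   Borel-Cantelli D_t = o(S_{t,h}) almost surely, provided S_{t,h} -> oo; the
   latter holds since P(X_{t+1,h} = 1 | past) >= theta_h / (c + t) and these
   bounds have a divergent sum.  As S_{t,h} / t^gamma* converges, D_t / t^gamma*
   -> 0, which is the first claim; the second is the quotient of two instances
   of the first, using S_{oo,h} > 0. *)

Lemma convex_comb_same {R : pzRingType} (u z : R) : u * z + (1 - u) * z = z.
Proof. by rewrite -mulrDl addrC subrK mul1r. Qed.

Lemma compensated_sq_step {R : realFieldType} (p V N : R) : 0 < p < 1 ->
  p * ((V + (1 - p)) ^+ 2 - (N + 1)) + (1 - p) * ((V - p) ^+ 2 - (N + 1))
  <= V ^+ 2 - N.
Proof. by move=> /andP[p0 p1]; nra. Qed.

Lemma compensated_quartic_step {R : realFieldType} (p V N : R) : 0 < p < 1 -> 0 <= N ->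
  p * ((V + (1 - p)) ^+ 4 - 8 * (N + 1) * (V + (1 - p)) ^+ 2) +
  (1 - p) * ((V - p) ^+ 4 - 8 * (N + 1) * (V - p) ^+ 2)
  <= V ^+ 4 - 8 * N * V ^+ 2.
Proof.
move=> /andP[p0 p1] N0; set s := p * (1 - p).
have s0 : 0 <= s by rewrite mulr_ge0 // ?subr_ge0 ltW.
have s1 : 4 * s <= 1 by have := sqr_ge0 (p + p - 1); rewrite /s; nra.
have -> : p * ((V + (1 - p)) ^+ 4 - 8 * (N + 1) * (V + (1 - p)) ^+ 2) +
    (1 - p) * ((V - p) ^+ 4 - 8 * (N + 1) * (V - p) ^+ 2) =
    V ^+ 4 - 8 * N * V ^+ 2 + (6 * V ^+ 2 * s + 4 * V * s * (1 - 2 * p)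
    + s * (1 - 3 * s) - 8 * V ^+ 2 - 8 * (N + 1) * s).
  by rewrite /s; ring.
rewrite gerDl.
have cross : 4 * V * s * (1 - 2 * p) <= 2 * V ^+ 2 * s + 2 * s.
  have := mulr_ge0 s0 (sqr_ge0 (V - (1 - 2 * p))).
  have : (1 - 2 * p) ^+ 2 <= 1 by nra.
  nra.
nra.
Qed.

Lemma harmonic_sum_unbounded {R : realType} (B : R) :
  exists M, B < \sum_(0 <= n < M) (n.+1%:R)^-1.
Proof.
apply: contrapT => /forallNP bounded; apply: (@dvg_harmonic R).
apply: nondecreasing_is_cvgn.
  by apply: nondecreasing_series => n _ _; exact: harmonic_ge0.
by exists B => _ [M _ <-]; rewrite leNgt; apply/negP => /[dup] /bounded.
Qed.

Lemma sum_inv_affine_unbounded {R : realType} {a c : R} : 0 < a -> 0 < c ->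
  forall (m : nat) (B : R), exists M, B < \sum_(m <= n < M) a / (c + n%:R).
Proof.
move=> a0 c0 m B; set K := a / (c + m%:R + 1).
have cm0 : 0 < c + m%:R + 1 by rewrite -addrA addr_gt0.
have K0 : 0 < K by rewrite divr_gt0.
have [M HM] := harmonic_sum_unbounded (B / K).
exists (m + M)%N; rewrite -{1}[m]add0n big_addn addKn.
apply: lt_le_trans (_ : K * \sum_(0 <= n < M) (n.+1%:R)^-1 <= _).
  by rewrite mulrC -ltr_pdivrMr.
rewrite mulr_sumr; apply: ler_sum => n _.
rewrite /K -mulrA ler_pM2l // -invfM lef_pV2 ?posrE ?mulr_gt0 ?ltr_wpDr //.
rewrite natrD -natr1 mulrDr mulr1 mulrDl mul1r.
have : 0 <= (c + m%:R) * n%:R by rewrite mulr_ge0 // ltW // ltr_wpDr.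
lra.
Qed.

Lemma littleo_ratio_cvg0 {R : realType} (s D q : nat -> R) (L : R) :
  (forall j : nat, \forall t \near \oo, j.+1%:R * `|D t| <= s t) ->
  (forall t, 0 <= q t) ->
  (fun t => s t / q t) @ \oo --> L ->
  (fun t => D t / q t) @ \oo --> 0.
Proof.
move=> Ds q0 cv; apply/cvgrPdist_le => e e0.
pose j := Num.Def.truncn ((`|L| + 1) / e).
have hj : `|L| + 1 < j.+1%:R * e by rewrite -ltr_pdivrMr // truncnS_gt.
have /cvgrPdist_le /(_ 1 ltr01) near_L := cv.
near=> t.
have sL : `|L - s t / q t| <= 1 by near: t; exact: near_L.
have Dst : j.+1%:R * `|D t| <= s t by near: t; exact: Ds.
rewrite sub0r normrN normrM [`|_^-1|]ger0_norm ?invr_ge0 //.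
have qi : 0 <= (q t)^-1 by rewrite invr_ge0.
have : j.+1%:R * (`|D t| * (q t)^-1) <= s t / q t by rewrite mulrA ler_wpM2r.
have := ler_norm (s t / q t - L); have := ler_norm L; rewrite distrC in sL.
have : 0 < j.+1%:R :> R by rewrite ltr0Sn.
nra.
Unshelve. all: by end_near.
Qed.

Lemma cvg_ratio_normalized {R : realType} (u v q : nat -> R) (a b : R) :
  b != 0 -> (\forall t \near \oo, q t != 0) ->
  (fun t => u t / q t) @ \oo --> a -> (fun t => v t / q t) @ \oo --> b ->
  (fun t => u t / v t) @ \oo --> a / b.
Proof.
move=> b0 q0 cu cv.
have /(_ eventually_filter eventually_filter) :=
  @cvgM R nat \oo _ _ _ _ _ cu (@cvgV R nat \oo _ _ _ b0 cv).
apply: cvg_trans; apply: near_eq_cvg; near=> t.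
have qt : q t != 0 by near: t.
by rewrite /= invfM invrK mulrA mulrAC -(mulrA _ _^-1) mulVf // mulr1.
Unshelve. all: by end_near.
Qed.

Lemma measurable_bool_eq d (T : measurableType d) (f : T -> bool) (b : bool) :
  measurable [set w | f w] -> measurable [set w | f w = b].
Proof.
case: b => mf.
  by rewrite (_ : [set w | f w = true] = [set w | f w]) //; apply/seteqP.
rewrite (_ : [set w | f w = false] = ~` [set w | f w]); first exact: measurableC.
by apply/seteqP; split => w /=; [move=> ->|move/negP/negbTE].
Qed.

Lemma measurable_forall_eq d (T : measurableType d) (I : finType)
    (f : I -> T -> bool) (b : I -> bool) :
  (forall i, measurable [set w | f i w]) -> measurable [set w | forall i, f i w = b i].
Proof.
move=> mf; rewrite (_ : [set w | _] = \bigcap_(i in [set: I]) [set w | f i w = b i]).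
  apply: fin_bigcap_measurable; first exact: finite_finset.
  by move=> i _; exact: measurable_bool_eq.
apply/seteqP; split => w /= fw i; first by move=> _; exact: fw.
exact: fw.
Qed.

Lemma measure_bigcup_finType d (T : measurableType d) (R : realType)
    (mu : {measure set T -> \bar R}) (I : finType) (F : I -> set T) :
  (forall i, measurable (F i)) -> trivIset setT F ->
  mu (\bigcup_(i in [set: I]) F i) = (\sum_(i : I) mu (F i))%E.
Proof.
move=> mF tF; rewrite measure_fin_bigcup //; last exact: finite_finset.
rewrite (fsbigE (enum I)) ?enum_uniq //; last by move=> i _; rewrite mem_enum.
rewrite -big_filter (_ : [seq i <- enum I | i \in [set: I]] = enum I) ?big_enum //.
by apply/all_filterP/allP => i _; rewrite in_setE.
Qed.

Definition set_step {A : Type} (a : nat -> A) (n : nat) (v : A) : nat -> A :=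
  fun m => if m == n then v else a m.

Lemma set_step_eq {A : Type} (a : nat -> A) n v : set_step a n v n = v.
Proof. by rewrite /set_step eqxx. Qed.

Lemma set_step_lt {A : Type} (a : nat -> A) n v m : (m < n)%N -> set_step a n v m = a m.
Proof. by move=> mn; rewrite /set_step ltn_eqF. Qed.

Definition onehot {I : eqType} (k : I) : I -> bool := fun i => i == k.

Lemma Scount_ge0 {R : realType} {H : finType} (x : nat -> H -> bool) t j :
  0 <= Scount x t j :> R.
Proof. by rewrite sumr_ge0 // => n _; rewrite ler0n. Qed.

Lemma Scount_le {R : realType} {H : finType} (x : nat -> H -> bool) t j :
  Scount x t j <= t%:R :> R.
Proof.
apply: le_trans (_ : \sum_(1 <= n < t.+1) (1 : R) <= _).
  by apply: ler_sum => n _; case: (x n j).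
by rewrite sumr_const_nat subn1.
Qed.

Definition nsucc {H : finType} (a : nat -> H -> bool) (h : H) (n : nat) : nat :=
  \sum_(1 <= i < n.+1) a i h.

Lemma nsuccS {H : finType} (a : nat -> H -> bool) h n :
  nsucc a h n.+1 = (nsucc a h n + a n.+1 h)%N.
Proof. by rewrite /nsucc big_nat_recr. Qed.

Lemma leq_nsucc {H : finType} (a : nat -> H -> bool) h : {homo nsucc a h : i n / (i <= n)%N}.
Proof.
move=> i n inn; rewrite /nsucc [X in (_ <= X)%N](big_cat_nat _ (n := i.+1)) //=.
exact: leq_addr.
Qed.

Lemma eq_nsucc {H : finType} (a a' : nat -> H -> bool) h n :
  (forall i, (1 <= i <= n)%N -> a i h = a' i h) -> nsucc a h n = nsucc a' h n.
Proof. by move=> aa'; apply: eq_big_nat => i /andP[i1]; rewrite ltnS => iN; rewrite aa' ?i1. Qed.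

Lemma nsucc_unbounded {H : finType} {a : nat -> H -> bool} {h : H} :
  (forall m, exists n, (m < n)%N /\ a n h) ->
  forall B, \forall t \near \oo, (B <= nsucc a h t)%N.
Proof.
move=> succ; elim=> [|B [t0 _ ge_B]]; first exact: nearW.
have [n [t0n an]] := succ t0.
exists n => // t /= nt; apply: (@leq_trans (nsucc a h n)); last exact: leq_nsucc.
case: n t0n an {nt} => // n t0n an.
by rewrite nsuccS an addn1 ltnS; exact: ge_B.
Qed.

Lemma nsucc_set_step {H : finType} (a : nat -> H -> bool) h j x i :
  (i <= j)%N -> nsucc (set_step a j.+1 x) h i = nsucc a h i.
Proof.
by move=> ij; apply: eq_nsucc => n /andP[_ ni]; rewrite set_step_lt // ltnS (leq_trans ni).
Qed.

Definition no_success_after {H : finType} (h : H) (m j : nat) (a : nat -> H -> bool) : bool :=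
  all (fun n => (m < n)%N ==> ~~ a n h) (iota 0 j.+1).

Lemma no_success_after_set_step {H : finType} (h : H) m j a (x : H -> bool) :
  no_success_after h m j.+1 (set_step a j.+1 x) =
  no_success_after h m j a && ((m < j.+1)%N ==> ~~ x h).
Proof.
rewrite /no_success_after -[j.+2]addn1 iotaD all_cat /= add0n andbT set_step_eq.
congr (_ && _); apply: eq_in_all => n; rewrite mem_iota add1n ltnS => /andP[_ nj].
by rewrite set_step_lt.
Qed.

Section Model.
Context {d : measure_display} {T : measurableType d} {R : realType}
  {P : probability T R} {H : finType}
  {theta : H -> R} {c : R} {gamma : H -> H -> R} { pi : H -> R }
  {X Y : nat -> H -> T -> bool}.
Hypothesis theta_gt0 : forall h, 0 < theta h.
Hypothesis theta_le_c : forall h, theta h <= c.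
Hypothesis gamma_ge0 : forall j h, 0 <= gamma j h.
Hypothesis gamma_colsum_le1 : forall h, \sum_(j : H) gamma j h <= 1.
Hypothesis X_measurable : forall n h, (0 < n)%N -> measurable [set w | X n h w].
Hypothesis Y_measurable : forall n k, (0 < n)%N -> measurable [set w | Y n k w].
Hypothesis X_dynamics : forall (t : nat) (a b : nat -> H -> bool) (x : H -> bool),
  P (past_event X Y t a b `&` Xvec_event X t.+1 x)
  = (P (past_event X Y t a b) *
     (\prod_(h : H) (if x h then pmodel theta c gamma a t h
                     else 1 - pmodel theta c gamma a t h))%:E)%E.
Hypothesis Y_onehot : forall n, (0 < n)%N -> forall w, exists! k, Y n k w.
Hypothesis pi_in01 : forall k, 0 < pi k < 1.
Hypothesis pi_sum1 : \sum_(k : H) pi k = 1.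
Hypothesis Y_independent :
  forall (n : nat) (a b : nat -> H -> bool) (x : H -> bool) (k : H), (0 < n)%N ->
  P (past_event X Y n.-1 a b `&` Xvec_event X n x `&` [set w | Y n k w])
  = (P (past_event X Y n.-1 a b `&` Xvec_event X n x) * (pi k)%:E)%E.

Local Notation trace := (nat -> H -> bool).
Local Notation trace0 := (fun (_ : nat) (_ : H) => false).
Local Notation pr := (pmodel theta c gamma).

Lemma c_gt0 (h : H) : 0 < c.
Proof. exact: lt_le_trans (theta_gt0 h) (theta_le_c h). Qed.

Lemma c_add_gt0 (h : H) (t : nat) : 0 < c + t%:R.
Proof. by rewrite ltr_wpDr // (c_gt0 h). Qed.

Lemma theta_ratio_ge0 (h : H) (n : nat) : 0 <= theta h / (c + n%:R).
Proof. by rewrite divr_ge0 // ltW // ?theta_gt0 ?(c_add_gt0 h). Qed.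

Lemma pmodel_ge (a : trace) t h : theta h / (c + t%:R) <= pr a t h.
Proof.
rewrite ler_pM2r ?invr_gt0 ?(c_add_gt0 h) // lerDl sumr_ge0 // => j _.
by rewrite mulr_ge0 // Scount_ge0.
Qed.

Lemma pmodel_in01 (a : trace) t h : 0 <= pr a t h <= 1.
Proof.
apply/andP; split.
  exact: le_trans (theta_ratio_ge0 h t) (pmodel_ge a t h).
rewrite ler_pdivrMr ?(c_add_gt0 h) // mul1r lerD //.
apply: le_trans (_ : \sum_j gamma j h * t%:R <= _).
  by apply: ler_sum => j _; rewrite ler_wpM2l // Scount_le.
by rewrite -mulr_suml ler_piMl.
Qed.

Lemma pi_ge0 k : 0 <= pi k.
Proof. by have /andP[/ltW] := pi_in01 k. Qed.

Definition step_prob (a : trace) (i : nat) (x : {ffun H -> bool}) : R :=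
  \prod_(h : H) (if x h then pr a i h else 1 - pr a i h).

Lemma step_prob_ge0 a i x : 0 <= step_prob a i x.
Proof.
rewrite prodr_ge0 // => h _; have /andP[p0 p1] := pmodel_in01 a i h.
by case: (x h); rewrite ?subr_ge0.
Qed.

Lemma step_prob_marginal a i h (f : bool -> R) :
  \sum_(x : {ffun H -> bool}) step_prob a i x * f (x h) =
  pr a i h * f true + (1 - pr a i h) * f false.
Proof.
pose g h' (b : bool) : R := (if b then pr a i h' else 1 - pr a i h') *
                            (if h' == h then f b else 1).
have -> : \sum_(x : {ffun H -> bool}) step_prob a i x * f (x h) =
          \sum_(x : {ffun H -> bool}) \prod_h' g h' (x h').
  apply: eq_bigr => x _; rewrite /step_prob /g big_split /=; congr (_ * _).
  by rewrite (bigD1 h) //= eqxx big1 ?mulr1 // => h' /negbTE ->.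
rewrite -bigA_distr_bigA (bigD1 h) //= [X in _ * X]big1 ?mulr1.
  by rewrite big_bool /g eqxx addrC.
by move=> h' /negbTE hh; rewrite big_bool /g hh !mulr1 /= addrC subrK.
Qed.

Lemma step_prob_sum1 a i : \sum_(x : {ffun H -> bool}) step_prob a i x = 1.
Proof.
rewrite /step_prob -(bigA_distr_bigA (fun h (b : bool) => if b then pr a i h else 1 - pr a i h)).
rewrite big1 // => h _.
by rewrite big_bool /= addrC subrK.
Qed.

Lemma pi_marginal k0 (f : bool -> R) :
  \sum_(k : H) pi k * f (k0 == k) = pi k0 * f true + (1 - pi k0) * f false.
Proof.
rewrite (bigD1 k0) //= eqxx (eq_bigr (fun k => pi k * f false)); last first.
  by move=> k; rewrite eq_sym => /negbTE ->.
rewrite -mulr_suml; congr (_ + _ * _).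
by rewrite -pi_sum1 [X in _ = X - _](bigD1 k0) //= addrC addrK.
Qed.

Definition step_mean (i : nat) (a b : trace) (G : trace -> trace -> R) : R :=
  \sum_(x : {ffun H -> bool}) \sum_(k : H) step_prob a i x * pi k *
    G (set_step a i.+1 (x : H -> bool)) (set_step b i.+1 (onehot k)).

(* [Epath r i a b F] is E[F(X, Y) | the past up to time i is (a, b)] for F
   determined by the first i + r steps, computed by iterating the one-step
   kernel [step_mean]; it stands in for conditional expectation. *)
Fixpoint Epath (r i : nat) (a b : trace) (F : trace -> trace -> R) : R :=
  if r is r'.+1 then step_mean i a b (fun a' b' => Epath r' i.+1 a' b' F) else F a b.

Lemma step_meanE i a b G :
  step_mean i a b G = \sum_(x : {ffun H -> bool}) step_prob a i x *
    \sum_(k : H) pi k * G (set_step a i.+1 (x : H -> bool)) (set_step b i.+1 (onehot k)).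
Proof.
apply: eq_bigr => x _; rewrite mulr_sumr; apply: eq_bigr => k _.
by rewrite mulrA (mulrC (step_prob _ _ _)).
Qed.

Lemma ler_step_mean i a b G G' : (forall a' b', G a' b' <= G' a' b') ->
  step_mean i a b G <= step_mean i a b G'.
Proof.
move=> GG'; apply: ler_sum => x _; apply: ler_sum => k _.
by rewrite ler_wpM2l // mulr_ge0 ?step_prob_ge0 ?pi_ge0.
Qed.

Lemma step_mean_cst i a b (e : R) : step_mean i a b (fun _ _ => e) = e.
Proof.
rewrite step_meanE; under eq_bigr do rewrite -mulr_suml pi_sum1 mul1r.
by rewrite -mulr_suml step_prob_sum1 mul1r.
Qed.

Lemma ler_Epath r i a b F G : (forall a' b', F a' b' <= G a' b') ->
  Epath r i a b F <= Epath r i a b G.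
Proof. by move=> FG; elim: r i a b => [|r IH] i a b //=; apply: ler_step_mean. Qed.

Lemma eq_Epath r i a b F G : (forall a' b', F a' b' = G a' b') ->
  Epath r i a b F = Epath r i a b G.
Proof. by move=> FG; apply/eqP; rewrite eq_le !ler_Epath // => a' b'; rewrite FG. Qed.

Lemma Epath_cst r i a b (e : R) : Epath r i a b (fun _ _ => e) = e.
Proof.
elim: r i a b => [|r IH] i a b //=.
by rewrite -[RHS](step_mean_cst i a b); apply: eq_bigr => x _; under eq_bigr do rewrite IH.
Qed.

Lemma Epath_lincomb r i a b F G (e e' : R) :
  Epath r i a b (fun a' b' => e * F a' b' + e' * G a' b') =
  e * Epath r i a b F + e' * Epath r i a b G.
Proof.
elim: r i a b => [|r IH] i a b //=.
rewrite /step_mean !mulr_sumr -big_split /=; apply: eq_bigr => x _.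
by rewrite !mulr_sumr -big_split /=; apply: eq_bigr => k _; rewrite IH; ring.
Qed.

Lemma EpathZ r i a b F (e : R) :
  Epath r i a b (fun a' b' => e * F a' b') = e * Epath r i a b F.
Proof.
rewrite (@eq_Epath _ _ _ _ _ (fun a' b' => e * F a' b' + 0 * F a' b')).
  by rewrite Epath_lincomb mul0r addr0.
by move=> a' b'; rewrite mul0r addr0.
Qed.

Lemma Epath_supermartingale {Phi : nat -> trace -> trace -> R} :
  (forall j a b, step_mean j a b (Phi j.+1) <= Phi j a b) ->
  forall r i a b, Epath r i a b (Phi (i + r)%N) <= Phi i a b.
Proof.
move=> super; elim=> [|r IH] i a b /=; first by rewrite addn0.
apply: le_trans (super i a b); apply: ler_step_mean => a' b'.
by rewrite addnS -addSn; apply: IH.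
Qed.

Definition path_event (F : trace -> trace -> bool) : set T :=
  [set w | F (fun n h => X n h w) (fun n k => Y n k w)].

Definition agree_upto (n : nat) (a b a' b' : trace) : Prop :=
  forall m h, (1 <= m <= n)%N -> a m h = a' m h /\ b m h = b' m h.

Definition determined_by (n : nat) (F : trace -> trace -> bool) : Prop :=
  forall a b a' b', agree_upto n a b a' b' -> F a b = F a' b'.

Lemma past_event_agree {i a b w} : past_event X Y i a b w ->
  agree_upto i (fun n h => X n h w) (fun n k => Y n k w) a b.
Proof. by move=> E m h /E [Ex Ey]; split; [exact: Ex|exact: Ey]. Qed.

Lemma past_event0 a b : past_event X Y 0 a b = setT.
Proof. by apply/seteqP; split => w // _ m /andP[/leq_trans h /h]. Qed.

Lemma past_eventS i a b : past_event X Y i.+1 a b = past_event X Y i a b `&`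
  (Xvec_event X i.+1 (a i.+1) `&` [set w | forall k, Y i.+1 k w = b i.+1 k]).
Proof.
apply/seteqP; split => w.
  move=> E; split; last by apply: E; rewrite ltnS leqnn.
  by move=> m /andP[m1 mi]; apply: E; rewrite m1 ltnW.
move=> [E [Ex Ey]] m /andP[m1]; rewrite leq_eqVlt ltnS => /orP[/eqP ->|mi].
  by split.
by apply: E; rewrite m1.
Qed.

Lemma measurable_past_event i a b : measurable (past_event X Y i a b).
Proof.
elim: i => [|i IH]; first by rewrite past_event0.
rewrite past_eventS; apply: measurableI => //.
by apply: measurableI; apply: measurable_forall_eq => h; [exact: X_measurable|exact: Y_measurable].
Qed.

Lemma past_event_fin_num i a b : P (past_event X Y i a b) \is a fin_num.
Proof.
rewrite ge0_fin_numE ?measure_ge0 //.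
by rewrite (le_lt_trans (probability_le1 P (measurable_past_event i a b))) ?ltry.
Qed.

Lemma eq_past_event i a b a' b' :
  agree_upto i a b a' b' -> past_event X Y i a b = past_event X Y i a' b'.
Proof.
move=> E; apply/seteqP; split => w Ew m mi; have [Ex Ey] := Ew m mi;
  split => h; have [Ea Eb] := E m h mi.
- by rewrite -Ea.
- by rewrite -Eb.
- by rewrite Ea.
- by rewrite Eb.
Qed.

Lemma past_event_set_step i a b (x y : H -> bool) :
  past_event X Y i (set_step a i.+1 x) (set_step b i.+1 y) = past_event X Y i a b.
Proof. by apply: eq_past_event => m h /andP[_ mi]; rewrite !set_step_lt. Qed.

Lemma Y_onehotE n k w : (0 < n)%N -> Y n k w -> forall k', Y n k' w = onehot k k'.
Proof.
move=> n0 Yk k'; have [k0 [_ U]] := Y_onehot _ n0 w.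
rewrite /onehot; case: eqP => [->//|nk]; apply/negP => Yk'.
by apply: nk; rewrite -(U k' Yk') (U k Yk).
Qed.

Definition past_extension i a b (xk : {ffun H -> bool} * H) : set T :=
  past_event X Y i.+1 (set_step a i.+1 (xk.1 : H -> bool)) (set_step b i.+1 (onehot xk.2)).

Lemma past_extensionE i a b x k : past_extension i a b (x, k) =
  past_event X Y i a b `&` Xvec_event X i.+1 x `&` [set w | Y i.+1 k w].
Proof.
rewrite /past_extension past_eventS past_event_set_step !set_step_eq.
apply/seteqP; split => w.
  by move=> [E [Ex Ey]]; split; [split|rewrite /= Ey /onehot eqxx].
by move=> [[E Ex] Yk]; split=> //; split=> //; exact: Y_onehotE.
Qed.

Lemma P_past_event_step i a b (x : {ffun H -> bool}) k :
  P (past_event X Y i.+1 (set_step a i.+1 (x : H -> bool)) (set_step b i.+1 (onehot k))) =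
  (P (past_event X Y i a b) * (step_prob a i x * pi k)%:E)%E.
Proof.
have := past_extensionE i a b x k; rewrite /past_extension /= => ->.
rewrite (Y_independent i.+1 a b (fun h => x h) k (ltn0Sn i)) /=.
by rewrite X_dynamics -muleA EFinM.
Qed.

Lemma past_event_partition i a b :
  past_event X Y i a b = \bigcup_(xk in [set: {ffun H -> bool} * H]) past_extension i a b xk.
Proof.
apply/seteqP; split => w.
  move=> E; have [k [Yk _]] := Y_onehot _ (ltn0Sn i) w.
  exists ([ffun h => X i.+1 h w], k) => //.
  by rewrite past_extensionE; split; [split=> // h /=; rewrite ffunE|].
by move=> [[x k] _]; rewrite past_extensionE => -[[]].
Qed.

Lemma trivIset_past_extension i a b : trivIset setT (past_extension i a b).
Proof.
move=> [x k] [x' k'] _ _ [w []]; rewrite !past_extensionE /= => -[[_ Ex] Yk] [[_ Ex'] Yk'].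
have -> : x = x' by apply/ffunP => h; rewrite -Ex -Ex'.
have [k0 [_ U]] := Y_onehot _ (ltn0Sn i) w.
by rewrite -(U k Yk) (U k' Yk').
Qed.

Lemma past_path_event_determined i a b F : determined_by i F ->
  past_event X Y i a b `&` path_event F = if F a b then past_event X Y i a b else set0.
Proof.
move=> dF; apply/seteqP; split => w.
  by move=> [E Fw]; rewrite -(dF _ _ _ _ (past_event_agree E)) Fw.
case: ifP => // Fab E; split => //.
by rewrite /path_event /= (dF _ _ _ _ (past_event_agree E)).
Qed.

Lemma measurable_past_path_event r : forall i a b F, determined_by (i + r) F ->
  measurable (past_event X Y i a b `&` path_event F).
Proof.
elim: r => [|r IH] i a b F dF.
  rewrite addn0 in dF; rewrite past_path_event_determined //.
  by case: ifP => _ //; exact: measurable_past_event.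
rewrite past_event_partition setI_bigcupl.
apply: fin_bigcup_measurable; first exact: finite_finset.
by move=> [x k] _; apply: IH; rewrite addSnnS.
Qed.

Lemma P_past_path_event r : forall i a b F, determined_by (i + r) F ->
  P (past_event X Y i a b `&` path_event F) =
  (P (past_event X Y i a b) * (Epath r i a b (fun a' b' => (F a' b')%:R))%:E)%E.
Proof.
elim: r => [|r IH] i a b F dF.
  rewrite addn0 in dF; rewrite past_path_event_determined //=.
  by case: (F a b); rewrite ?mule1 ?measure0 ?mule0.
have dF' : determined_by (i.+1 + r) F by rewrite addSnnS.
have P_ext xk : P (past_extension i a b xk `&` path_event F) =
    (P (past_event X Y i a b) * (step_prob a i xk.1 * pi xk.2 *
     Epath r i.+1 (set_step a i.+1 (xk.1 : H -> bool)) (set_step b i.+1 (onehot xk.2))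
       (fun a' b' => (F a' b')%:R))%:E)%E.
  by rewrite /past_extension IH // P_past_event_step -muleA -EFinM.
rewrite {1}past_event_partition setI_bigcupl measure_bigcup_finType; last 2 first.
- by move=> [x k]; apply: measurable_past_path_event dF'.
- move=> xk xk' _ _ [w [[E _] [E' _]]].
  by apply: (@trivIset_past_extension i a b) => //; exists w.
rewrite (eq_bigr _ (fun xk _ => P_ext xk)).
rewrite -(fineK (past_event_fin_num i a b)).
under eq_bigr do rewrite -EFinM.
rewrite sumEFin -EFinM /=; congr _%:E.
rewrite /step_mean mulr_sumr; under [RHS]eq_bigr do rewrite mulr_sumr.
rewrite pair_bigA /=.
by apply: eq_bigr => -[x k] _ /=; ring.
Qed.

Lemma P_path_event {t : nat} {F : trace -> trace -> bool} : determined_by t F ->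
  P (path_event F) = (Epath t 0 trace0 trace0 (fun a b => (F a b)%:R))%:E.
Proof.
move=> dF; have := @P_past_path_event t 0 trace0 trace0 F.
by rewrite add0n past_event0 setTI probability_setT mul1e; apply.
Qed.

Lemma measurable_path_event {t : nat} {F : trace -> trace -> bool} :
  determined_by t F -> measurable (path_event F).
Proof.
move=> dF; have := @measurable_past_path_event t 0 trace0 trace0 F.
by rewrite add0n past_event0 setTI; apply.
Qed.

Lemma step_mean_XY j a b h k0 (f : bool -> bool -> R) (G : trace -> trace -> R) :
  (forall (x : {ffun H -> bool}) k,
     G (set_step a j.+1 (x : H -> bool)) (set_step b j.+1 (onehot k)) = f (x h) (k0 == k)) ->
  step_mean j a b G =
  pr a j h * (pi k0 * f true true + (1 - pi k0) * f true false) +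
  (1 - pr a j h) * (pi k0 * f false true + (1 - pi k0) * f false false).
Proof.
move=> Gf; rewrite step_meanE.
under eq_bigr do under eq_bigr do rewrite Gf.
under eq_bigr do rewrite (pi_marginal k0 (f _)).
exact: (step_prob_marginal a j h (fun bx => pi k0 * f bx true + (1 - pi k0) * f bx false)).
Qed.

Lemma step_mean_X j a b h (f : bool -> R) (G : trace -> trace -> R) :
  (forall (x : {ffun H -> bool}) k,
     G (set_step a j.+1 (x : H -> bool)) (set_step b j.+1 (onehot k)) = f (x h)) ->
  step_mean j a b G = pr a j h * f true + (1 - pr a j h) * f false.
Proof.
move=> Gf; rewrite (@step_mean_XY j a b h h (fun bx _ => f bx)) //.
by rewrite -!mulrDl !(addrC (pi h)) !subrK !mul1r.
Qed.

Section Successes.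
Variable h : H.

Definition no_success_potential (m j : nat) (a b : trace) : R :=
  (no_success_after h m j a)%:R * (1 + \sum_(m <= n < j) theta h / (c + n%:R)).

Lemma no_success_potential_step m j a b :
  step_mean j a b (no_success_potential m j.+1) <= no_success_potential m j a b.
Proof.
set S := \sum_(m <= n < j) theta h / (c + n%:R).
have S0 : 0 <= S by rewrite sumr_ge0 // => n _; exact: theta_ratio_ge0.
rewrite (@step_mean_X j a b h (fun bx => (no_success_after h m j a &&
    ((m < j.+1)%N ==> ~~ bx))%:R * (1 + \sum_(m <= n < j.+1) theta h / (c + n%:R)))); last first.
  by move=> x k; rewrite /no_success_potential no_success_after_set_step.
rewrite /no_success_potential -/S /=; case: (leqP m j) => mj; last first.
  by rewrite /S !big_geq ?(ltnW mj) // ltnNge mj /= !andbT convex_comb_same.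
rewrite big_nat_recr //= -/S ltnS mj /= andbF mul0r mulr0 add0r.
case: (no_success_after h m j a); rewrite ?mul0r ?mulr0 // !mul1r.
have := pmodel_ge a j h; have /andP[p0 p1] := pmodel_in01 a j h.
set p := pr a j h; set q := theta h / (c + j%:R) => qp.
have q0 : 0 <= q := theta_ratio_ge0 h j.
(* (1 - p) (1 + S + q) <= (1 - q) (1 + S + q) <= 1 + S *)
have pq : 0 <= p - q by rewrite subr_ge0.
have := mulr_ge0 pq (addr_ge0 (addr_ge0 ler01 S0) q0).
have := mulr_ge0 q0 (addr_ge0 S0 q0); nra.
Qed.

Lemma determined_by_no_success_after m M : determined_by M (fun a _ => no_success_after h m M a).
Proof.
move=> a b a' b' E; apply: eq_in_all => n.
rewrite mem_iota add0n ltnS => /andP[_]; case: n => [//|n] nM.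
by have [-> _] := E n.+1 h nM.
Qed.

Lemma P_no_success_after_le m M :
  (P (path_event (fun a _ => no_success_after h m M a)) <=
   ((1 + \sum_(m <= n < M) theta h / (c + n%:R))^-1)%:E)%E.
Proof.
rewrite (P_path_event (determined_by_no_success_after m M)) lee_fin.
set S := 1 + _.
have S0 : 0 < S by rewrite ltr_pwDl // sumr_ge0 // => n _; exact: theta_ratio_ge0.
rewrite -(ler_pM2r S0) mulVf ?gt_eqF // mulrC -EpathZ.
rewrite (@eq_Epath _ _ _ _ _ (no_success_potential m M)); last by move=> a b; rewrite mulrC.
have := Epath_supermartingale (no_success_potential_step m) M 0 trace0 trace0.
by rewrite add0n {2}/no_success_potential big_geq //= addr0 mulr1.
Qed.

Lemma ae_success_after m : {ae P, forall w, exists n, (m < n)%N /\ X n h w}.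
Proof.
pose N M := path_event (fun a _ => no_success_after h m M a).
have mN M : measurable (N M) := measurable_path_event (determined_by_no_success_after m M).
exists (\bigcap_M N M); split.
- exact: bigcapT_measurable.
- apply/eqP; rewrite eq_le measure_ge0 andbT; apply/lee_addgt0Pr => e e0; rewrite add0e.
  have [M SM] := sum_inv_affine_unbounded (theta_gt0 h) (c_gt0 h) m e^-1.
  have /le_trans -> // : (P (\bigcap_M N M) <= P (N M))%E.
    apply: le_measure; rewrite ?inE; [exact: bigcapT_measurable|exact: mN|].
    exact: bigcap_inf.
  apply: le_trans (P_no_success_after_le m M) _; rewrite lee_fin.
  rewrite -[leRHS]invrK lef_pV2 ?posrE ?invr_gt0 //; last first.
    by rewrite ltr_pwDl // sumr_ge0 // => n _; exact: theta_ratio_ge0.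
  by apply/ltW/(lt_le_trans SM); rewrite lerDr.
- move=> w /= /forallNP none M _; apply/allP => n _; apply/implyP => mn.
  by apply/negP => Xn; apply: (none n).
Qed.

End Successes.

Section Deviation.
Variables (h k : H).

Definition dev (a b : trace) (n : nat) : R :=
  \sum_(1 <= i < n.+1) (a i h)%:R * ((b i k)%:R - pi k).

Section Stopped.
Variable m : nat.

Definition stopped_dev (a b : trace) (n : nat) : R :=
  \sum_(1 <= i < n.+1) (a i h && (nsucc a h i <= m)%N)%:R * ((b i k)%:R - pi k).

Definition stopped_count (a : trace) (n : nat) : nat := minn (nsucc a h n) m.

Lemma stopped_dev_set_step a b j (x : H -> bool) k' :
  stopped_dev (set_step a j.+1 x) (set_step b j.+1 (onehot k')) j.+1 =
  stopped_dev a b j + (x h && (nsucc a h j < m)%N)%:R * ((k == k')%:R - pi k).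
Proof.
rewrite /stopped_dev big_nat_recr //; congr (_ + _).
  apply: eq_big_nat => i /andP[_ ij].
  by rewrite !set_step_lt // nsucc_set_step // -ltnS.
rewrite nsuccS nsucc_set_step // !set_step_eq /onehot.
by case: (x h); rewrite ?addn1 ?addn0.
Qed.

Lemma stopped_count_set_step a j (x : H -> bool) :
  stopped_count (set_step a j.+1 x) j.+1 = (stopped_count a j + (x h && (nsucc a h j < m)%N))%N.
Proof.
rewrite /stopped_count nsuccS nsucc_set_step // set_step_eq.
by case: (x h) => /=; lia.
Qed.

Lemma stopped_compensated_step (Phi : R -> R -> R) j a b :
  (forall V N, 0 <= N -> pi k * Phi (V + (1 - pi k)) (N + 1) +
     (1 - pi k) * Phi (V - pi k) (N + 1) <= Phi V N) ->
  step_mean j a b (fun a' b' => Phi (stopped_dev a' b' j.+1) (stopped_count a' j.+1)%:R)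
  <= Phi (stopped_dev a b j) (stopped_count a j)%:R.
Proof.
move=> Phi_super; set V := stopped_dev a b j; set N := (stopped_count a j)%:R.
rewrite (@step_mean_XY j a b h k (fun bx bk => Phi (V + (bx && (nsucc a h j < m)%N)%:R *
   (bk%:R - pi k)) (stopped_count a j + (bx && (nsucc a h j < m)%N))%N%:R)); last first.
  by move=> x k'; rewrite stopped_dev_set_step stopped_count_set_step.
have /andP[p0 p1] := pmodel_in01 a j h.
case: (nsucc a h j < m)%N; rewrite !mulrb /= ?addn0 ?mul0r ?addr0 -/N; last first.
  by rewrite !convex_comb_same.
rewrite !mul1r sub0r natrD mulr1n -/N convex_comb_same.
have := Phi_super V N (ler0n _ _); set A := _ + _ => A_le.
have := ler_wpM2l p0 A_le; lra.
Qed.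

Lemma Epath_stopped_dev4_le t :
  Epath t 0 trace0 trace0 (fun a b => stopped_dev a b t ^+ 4) <= 8 * m%:R ^+ 2.
Proof.
set E := Epath t 0 trace0 trace0.
have V0 : stopped_dev trace0 trace0 0 = 0 by rewrite /stopped_dev big_geq.
have N0 : stopped_count trace0 0 = 0%N by rewrite /stopped_count /nsucc big_geq // min0n.
have quartic := Epath_supermartingale (fun j a b => stopped_compensated_step
  (fun V N => V ^+ 4 - 8 * N * V ^+ 2) j a b
  (fun V N N0 => compensated_quartic_step _ V N (pi_in01 k) N0)) t 0 trace0 trace0.
have square := Epath_supermartingale (fun j a b => stopped_compensated_step
  (fun V N => V ^+ 2 - N) j a b
  (fun V N _ => compensated_sq_step _ V N (pi_in01 k))) t 0 trace0 trace0.
rewrite /= add0n V0 N0 in quartic square.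
rewrite (@eq_Epath t 0 trace0 trace0 _ (fun a b => 1 * stopped_dev a b t ^+ 4 +
  (-8) * ((stopped_count a t)%:R * stopped_dev a b t ^+ 2))) in quartic; last first.
  by move=> a b; ring.
rewrite (@eq_Epath t 0 trace0 trace0 _ (fun a b => 1 * stopped_dev a b t ^+ 2 +
  (-1) * (stopped_count a t)%:R)) in square; last by move=> a b; ring.
rewrite !Epath_lincomb -/E in quartic square.
have m0 : 0 <= m%:R :> R by [].
have NV2 : E (fun a b => (stopped_count a t)%:R * stopped_dev a b t ^+ 2) <=
           m%:R * E (fun a b => stopped_dev a b t ^+ 2).
  rewrite -EpathZ; apply: ler_Epath => a b.
  by rewrite ler_wpM2r ?sqr_ge0 // ler_nat geq_minr.
have EN : E (fun a b => (stopped_count a t)%:R) <= m%:R.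
  rewrite -[leRHS](Epath_cst t 0 trace0 trace0); apply: ler_Epath => a b.
  by rewrite ler_nat geq_minr.
have V2N : E (fun a b => stopped_dev a b t ^+ 2) <= E (fun a b => (stopped_count a t)%:R).
  lra.
have := ler_wpM2l m0 V2N; have := ler_wpM2l m0 EN; lra.
Qed.

End Stopped.

Lemma stopped_dev_at_success m a b n t : (n <= t)%N -> nsucc a h n = m ->
  stopped_dev m a b t = dev a b n.
Proof.
move=> nt Sm; rewrite /stopped_dev /dev (big_cat_nat _ (n := n.+1)) //=.
rewrite [X in _ + X]big_nat_cond [X in _ + X]big1 ?addr0.
  apply: eq_big_nat => i /andP[i1]; rewrite ltnS => iN.
  by case: (a i h) => //=; rewrite -Sm leq_nsucc.
move=> [//|i] /andP[/andP[ni _] _]; case Ai: (a i.+1 h) => /=; last by rewrite mul0r.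
have : (m < nsucc a h i.+1)%N by rewrite nsuccS Ai addn1 ltnS -Sm leq_nsucc.
by rewrite ltnNge => /negbTE ->; rewrite mul0r.
Qed.

Definition large_dev (j m t : nat) (a b : trace) : bool :=
  [exists n : 'I_t.+1, (nsucc a h n == m) && (m%:R < j.+1%:R * `|dev a b n|)].

(* Markov's inequality, pathwise: on [large_dev] the stopped deviation equals
   the deviation at the time of the m-th success. *)
Lemma large_dev_le j m t a b : (0 < m)%N ->
  (large_dev j m t a b)%:R <= (j.+1%:R / m%:R) ^+ 4 * stopped_dev m a b t ^+ 4.
Proof.
move=> m0; have m0' : 0 < m%:R :> R by rewrite ltr0n.
case: (boolP (large_dev j m t a b)) => /= [/existsP [n /andP[/eqP Sm Dn]]|_]; last first.
  by rewrite mulr_ge0 ?exprn_even_ge0 // exprn_ge0 // divr_ge0.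
rewrite (@stopped_dev_at_success m a b n t (leq_ord n) Sm) -exprMn.
set u := j.+1%:R / m%:R * dev a b n.
have u1 : 1 < `|u| by rewrite normrM ger0_norm ?divr_ge0 // mulrAC ltr_pdivlMr // mul1r.
have -> : u ^+ 4 = (`|u| ^+ 2) ^+ 2 by rewrite real_normK ?num_real // -exprM.
by apply/exprn_ege1/exprn_ege1/ltW.
Qed.

Lemma determined_by_large_dev j m t : determined_by t (large_dev j m t).
Proof.
move=> a b a' b' E; apply: eq_existsb => n.
have En i : (1 <= i <= n)%N -> forall h', a i h' = a' i h' /\ b i h' = b' i h'.
  by move=> /andP[i1 iN] h'; apply: E; rewrite i1 (leq_trans iN) // -ltnS ltn_ord.
have -> : nsucc a h n = nsucc a' h n by apply: eq_nsucc => i /En /(_ h) [].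
suff -> : dev a b n = dev a' b' n by [].
by apply: eq_big_nat => i; rewrite ltnS => /En Ei; have [-> _] := Ei h; have [_ ->] := Ei k.
Qed.

Lemma P_large_dev j m t : (0 < m)%N ->
  (P (path_event (large_dev j m t)) <= (8 * j.+1%:R ^+ 4 / m%:R ^+ 2)%:E)%E.
Proof.
move=> m0; rewrite (P_path_event (determined_by_large_dev j m t)) lee_fin.
apply: le_trans (@ler_Epath t 0 trace0 trace0 _ _ (fun a b => @large_dev_le j m t a b m0)) _.
rewrite EpathZ; apply: le_trans (ler_wpM2l _ (Epath_stopped_dev4_le m t)) _.
  by rewrite exprn_ge0 // divr_ge0.
have -> : (j.+1%:R / m%:R) ^+ 4 * (8 * m%:R ^+ 2) = 8 * j.+1%:R ^+ 4 / m%:R ^+ 2 :> R.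
  by field; rewrite gt_eqF // ltr0n.
exact: lexx.
Qed.

Definition large_dev_event (j m : nat) : set T := \bigcup_t path_event (large_dev j m t).

Lemma measurable_large_dev_event j m : measurable (large_dev_event j m).
Proof.
by apply: bigcupT_measurable => t; exact: measurable_path_event (determined_by_large_dev j m t).
Qed.

Lemma P_large_dev_event {j m} : (0 < m)%N ->
  (P (large_dev_event j m) <= (8 * j.+1%:R ^+ 4 / m%:R ^+ 2)%:E)%E.
Proof.
move=> m0; have mG t := measurable_path_event (determined_by_large_dev j m t).
have nondecr : {homo (fun t => path_event (large_dev j m t)) : n n' / (n <= n')%N >-> (n <= n')%O}.
  move=> t t' tt'; apply/subsetPset => w /existsP [n Hn]; apply/existsP.
  by exists (widen_ord (tt' : (t.+1 <= t'.+1)%N) n).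
have cv := @nondecreasing_cvg_mu _ _ _ P _ mG (measurable_large_dev_event j m) nondecr.
rewrite -(cvg_lim _ cv) //; apply: lime_le; first by apply/cvg_ex; eexists; exact: cv.
by apply: nearW => t; exact: P_large_dev.
Qed.

Lemma P_large_dev_event_summable j :
  (\sum_(0 <= n <oo) P (large_dev_event j n.+1) < +oo)%E.
Proof.
pose C : R := 16 * j.+1%:R ^+ 4.
have C0 : 0 <= C by rewrite mulr_ge0 // exprn_ge0.
apply: (@le_lt_trans _ _ C%:E); last exact: ltry.
apply: lime_le; first by apply: is_cvg_nneseries => n _ _; exact: measure_ge0.
apply: nearW => N.
(* 8 / x^2 <= 16 (1/x - 1/(x+1)) for x >= 1, and the right-hand side telescopes *)
apply: le_trans (_ : (\sum_(0 <= n < N) (C * ((n.+1%:R)^-1 - (n.+2%:R)^-1))%:E <= _)%E).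
  apply: lee_sum => n _; apply: le_trans (P_large_dev_event (ltn0Sn n)) _.
  rewrite lee_fin -[n.+2]addn1 natrD; set x := n.+1%:R.
  have x1 : 1 <= x by rewrite ler1n.
  rewrite -subr_ge0 (_ : C * (x^-1 - (x + 1%:R)^-1) - 8 * j.+1%:R ^+ 4 / x ^+ 2 =
              8 * j.+1%:R ^+ 4 * (x - 1) / (x ^+ 2 * (x + 1))).
    by rewrite divr_ge0 // ?mulr_ge0 ?exprn_ge0 //; lra.
  by rewrite /C; field; apply/andP; split; rewrite gt_eqF //; lra.
rewrite sumEFin lee_fin -mulr_sumr.
rewrite (telescope_sumr_eq (fun i => - (i.+1%:R)^-1)) //; last by move=> i _; rewrite opprK addrC.
by rewrite opprK /= invr1 -[leRHS]mulr1 ler_wpM2l.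
Qed.

Lemma ae_no_large_dev_eventually j :
  {ae P, forall w, exists n0, forall m, (n0 <= m)%N -> ~ large_dev_event j m.+1 w}.
Proof.
have mF n := measurable_large_dev_event j n.+1.
exists (lim_sup_set (fun n => large_dev_event j n.+1)); split.
- by apply: bigcapT_measurable => n; apply: bigcup_measurable => m _.
- exact: lim_sup_set_cvg0 mF (P_large_dev_event_summable j).
- move=> w /= never n _; apply: contrapT => often; apply: never.
  by exists n => m nm Fmw; apply: often; exists m.
Qed.

End Deviation.

Lemma joint_count_decomposition h k (a b : trace) t :
  \sum_(1 <= n < t.+1) (a n h)%:R * (b n k)%:R = pi k * (nsucc a h t)%:R + dev h k a b t.
Proof. by rewrite /nsucc /dev natr_sum mulr_sumr -big_split /=; apply: eq_bigr => n _; ring. Qed.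

Lemma ae_dev_littleo h k : {ae P, forall w, forall j : nat, \forall t \near \oo,
  j.+1%:R * `|dev h k (fun n h => X n h w) (fun n k => Y n k w) t| <=
  (nsucc (fun n h => X n h w) h t)%:R}.
Proof.
apply: filterS2 (ae_foralln (ae_success_after h)) (ae_foralln (ae_no_large_dev_eventually h k)).
move=> w succ no_large j; have [n0 small] := no_large j.
have := @nsucc_unbounded _ (fun n h => X n h w) h succ n0.+1; apply: filterS => t.
case Et : (nsucc _ h t) => [//|s]; rewrite ltnS => n0s.
rewrite leNgt; apply/negP => large; apply: (small s n0s); exists t => //.
by apply/existsP; exists ord_max; rewrite /= Et eqxx.
Qed.

Lemma ae_cvg_joint_count h k {g : R} {Sinf : T -> R} :
  {ae P, forall w, ((\sum_(1 <= n < t.+1) (X n h w)%:R) / (t%:R `^ g))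
     @[t --> \oo] --> Sinf w} ->
  {ae P, forall w, ((\sum_(1 <= n < t.+1) (X n h w)%:R * (Y n k w)%:R) / (t%:R `^ g))
     @[t --> \oo] --> pi k * Sinf w}.
Proof.
move=> cvgS; apply: filterS2 cvgS (ae_dev_littleo h k) => w cvgSw littleo.
pose a := fun n h => X n h w; pose b := fun n k => Y n k w.
have -> : (fun t => (\sum_(1 <= n < t.+1) (X n h w)%:R * (Y n k w)%:R) / (t%:R `^ g)) =
    (fun t => pi k * ((nsucc a h t)%:R / (t%:R `^ g)) + dev h k a b t / (t%:R `^ g)).
  by apply: funext => t; rewrite (joint_count_decomposition h k a b) mulrDl mulrA.
have cvg_nsucc : (fun t => (nsucc a h t)%:R / (t%:R `^ g)) @ \oo --> Sinf w.
  by under eq_fun do rewrite /nsucc natr_sum.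
rewrite -[X in _ --> X]addr0; apply: cvgD; first exact: cvgMl_tmp cvg_nsucc.
by apply: littleo_ratio_cvg0 littleo _ cvg_nsucc => t; exact: powR_ge0.
Qed.

Lemma ae_cvg_count_ratio h k j {g : R} {Sinf : T -> R} :
  {ae P, forall w, ((\sum_(1 <= n < t.+1) (X n h w)%:R) / (t%:R `^ g))
     @[t --> \oo] --> Sinf w} ->
  {ae P, forall w, 0 < Sinf w} ->
  {ae P, forall w, ((\sum_(1 <= n < t.+1) (X n h w)%:R * (Y n k w)%:R)
                    / (\sum_(1 <= n < t.+1) (X n h w)%:R * (Y n j w)%:R))
     @[t --> \oo] --> pi k / pi j}.
Proof.
move=> cvgS Sinf_gt0.
apply: filterS3 (ae_cvg_joint_count h k cvgS) (ae_cvg_joint_count h j cvgS) Sinf_gt0.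
move=> w cvg_k cvg_j Sw; have /andP[pj0 _] := pi_in01 j.
have -> : pi k / pi j = pi k * Sinf w / (pi j * Sinf w) by field; rewrite !gt_eqF.
apply: cvg_ratio_normalized cvg_k cvg_j; first by rewrite mulf_neq0 // gt_eqF.
near=> t; rewrite gt_eqF // powR_gt0 // ltr0n.
by near: t; exact: nbhs_infty_gt.
Unshelve. all: by end_near.
Qed.

End Model.

Theorem theorem3 (d : measure_display) (T : measurableType d) (R : realType)
  (P : probability T R) (H : finType)
  (theta : H -> R) (c : R) (gamma : H -> H -> R) (pi : H -> R)
  (X Y : nat -> H -> T -> bool) (gstar : R) (Sinf : H -> T -> R) :
  (* parameters *)
  (forall h, 0 < theta h) ->
  (forall h, theta h <= c) ->
  (* (A1) *)
  (forall j h, 0 <= gamma j h) ->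
  (forall h, \sum_(j : H) gamma j h <= 1) ->
  (* (A2) *)
  irreducible gamma ->
  (* measurability of the 0/1 random variables *)
  (forall n h, (0 < n)%N -> measurable [set w | X n h w]) ->
  (forall n k, (0 < n)%N -> measurable [set w | Y n k w]) ->
  (* the interacting Bernoulli dynamics, conditionally on the past
     sigma(X_m, Y_m : m <= t) *)
  (forall (t : nat) (xw yw : nat -> H -> bool) (x : H -> bool),
     P (past_event X Y t xw yw `&` Xvec_event X t.+1 x)
     = (P (past_event X Y t xw yw) *
        (\prod_(h : H) (if x h then pmodel theta c gamma xw t h
                        else 1 - pmodel theta c gamma xw t h))%:E)%E) ->
  (* exactly one component of Y_n equals 1 *)
  (forall n, (0 < n)%N -> forall w, exists! k, Y n k w) ->
  (* (A3) *)
  (forall k, 0 < pi k < 1) ->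
  \sum_(k : H) pi k = 1 ->
  (forall (n : nat) (xw yw : nat -> H -> bool) (x : H -> bool) (k : H),
     (0 < n)%N ->
     P (past_event X Y n.-1 xw yw `&` Xvec_event X n x `&` [set w | Y n k w])
     = (P (past_event X Y n.-1 xw yw `&` Xvec_event X n x) * (pi k)%:E)%E) ->
  (* gamma^* is the Perron-Frobenius eigenvalue of Gamma *)
  PF_eigenvalue gamma gstar ->
  (* S_{infty,h}: the a.s. limit of S_{t,h} / t^{gamma^*}, finite and > 0 *)
  (forall h, {ae P, forall w,
     ((\sum_(1 <= n < t.+1) (X n h w)%:R) / (t%:R `^ gstar))
       @[t --> \oo] --> Sinf h w}) ->
  (forall h, {ae P, forall w, 0 < Sinf h w}) ->
  (forall h k, {ae P, forall w,
     ((\sum_(1 <= n < t.+1) (X n h w)%:R * (Y n k w)%:R)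
                       / (t%:R `^ gstar))
       @[t --> \oo] --> pi k * Sinf h w})
  /\
  (forall k j h, {ae P, forall w,
     ((\sum_(1 <= n < t.+1) (X n h w)%:R * (Y n k w)%:R)
                   / (\sum_(1 <= n < t.+1) (X n h w)%:R * (Y n j w)%:R))
       @[t --> \oo] --> pi k / pi j}).
Proof.
move=> theta_gt0 theta_le_c gamma_ge0 gamma_le1 _ X_meas Y_meas X_dyn Y_onehot
  pi_in01 pi_sum1 Y_indep _ cvg_S Sinf_gt0.
(* (A2) and the Perron-Frobenius property only enter through the existence of
   S_{oo,h}, which is assumed. *)
split=> [h k|k j h].
- exact: (ae_cvg_joint_count theta_gt0 theta_le_c gamma_ge0 gamma_le1 X_meas Y_meas
    X_dyn Y_onehot pi_in01 pi_sum1 Y_indep h k (cvg_S h)).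
- exact: (ae_cvg_count_ratio theta_gt0 theta_le_c gamma_ge0 gamma_le1 X_meas Y_meas
    X_dyn Y_onehot pi_in01 pi_sum1 Y_indep h k j (cvg_S h) (Sinf_gt0 h)).
Qed.
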